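(* Let $\alpha,L>0$, $\tau_0=\alpha/L$, $A_0=1$, and for $k\ge0$ define $a_k=\frac{\tau_k+\sqrt{\tau_k^2+4\tau_kA_k}}{2}$, $\tau_{k+1}=\tau_k+\alpha a_k/L$, $A_{k+1}=A_k+a_k$. Then for all $k\ge0$: (a) $A_k/L=\tau_k/\alpha$; (b) $a_k^2=\tau_kA_{k+1}=\tau_{k+1}A_k$; (c) $A_k\ge\left(1+\frac{\sqrt\alpha}{2\sqrt L}\right)^{2k}$. *)

From mathcomp Require Import all_boot all_order all_algebra.
Set Implicit Arguments. Unset Strict Implicit. Unset Printing Implicit Defensive.
Import Order.TTheory GRing.Theory Num.Theory.
Local Open Scope ring_scope.

Definition step_a (R : rcfType) (tau A : R) : R :=
  (tau + Num.sqrt (tau ^+ 2 + 4%:R * tau * A)) / 2%:R.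

Fixpoint tauA (R : rcfType) (alpha L : R) (k : nat) : R * R :=
  match k with
  | 0%N => (alpha / L, 1)
  | k'.+1 =>
      let: (t, A) := tauA alpha L k' in
      let a := step_a t A in
      (t + alpha * a / L, A + a)
  end.

Definition tau_seq (R : rcfType) (alpha L : R) (k : nat) : R := (tauA alpha L k).1.
Definition A_seq (R : rcfType) (alpha L : R) (k : nat) : R := (tauA alpha L k).2.
Definition a_seq (R : rcfType) (alpha L : R) (k : nat) : R :=
  step_a (tau_seq alpha L k) (A_seq alpha L k).

From mathcomp Require Import all_boot all_order all_algebra.
From mathcomp Require Import lra ring.
Set Implicit Arguments. Unset Strict Implicit. Unset Printing Implicit Defensive.
Import Order.TTheory GRing.Theory Num.Theory.
Local Open Scope ring_scope.

(* The step a = step_a t A is the positive root of a^2 = t (A + a), which gives (b).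
   Since tau_{k+1} - tau_k = (alpha/L) (A_{k+1} - A_k), the invariant tau_k = (alpha/L) A_k
   holds throughout, which gives (a) and the second half of (b).  Writing alpha/L = 4 c^2
   with c = sqrt alpha / (2 sqrt L), the root satisfies a >= t/2 + sqrt (t A) = 2 c^2 A + 2 c A,
   so A_{k+1} = A_k + a_k >= (1 + c)^2 A_k, which gives (c). *)

Section StepRoot.
Variable R : rcfType.

Lemma step_a_sqr (t A : R) : 0 <= t -> 0 <= A ->
  step_a t A ^+ 2 = t * (A + step_a t A).
Proof.
move=> t_ge0 A_ge0; rewrite /step_a.
have disc_ge0 : 0 <= t ^+ 2 + 4%:R * t * A by rewrite addr_ge0 ?sqr_ge0 // !mulr_ge0.
move: (sqr_sqrtr disc_ge0); set s := Num.sqrt _ => s_sqr.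
have -> : ((t + s) / 2%:R) ^+ 2 = (t ^+ 2 + 2%:R * t * s + s ^+ 2) / 4%:R by field.
by rewrite s_sqr; field.
Qed.

Lemma step_a_ge (t A : R) : 0 <= t -> 0 <= A ->
  t / 2%:R + Num.sqrt (t * A) <= step_a t A.
Proof.
move=> t_ge0 A_ge0; rewrite /step_a mulrDl lerD2l ler_pdivlMr ?ltr0n //.
have tA_ge0 : 0 <= t * A by rewrite mulr_ge0.
rewrite -[_ * 2%:R]ger0_norm ?mulr_ge0 ?sqrtr_ge0 // -sqrtr_sqr.
rewrite ler_sqrt ?addr_ge0 ?sqr_ge0 ?mulr_ge0 //.
rewrite exprMn sqr_sqrtr //; nra.
Qed.

Lemma step_a_growth (c A : R) : 0 <= c -> 0 <= A ->
  (1 + c) ^+ 2 * A <= A + step_a (4%:R * c ^+ 2 * A) A.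
Proof.
move=> c_ge0 A_ge0.
have t_ge0 : 0 <= 4%:R * c ^+ 2 * A by rewrite !mulr_ge0 ?sqr_ge0.
have := step_a_ge t_ge0 A_ge0.
have -> : 4%:R * c ^+ 2 * A * A = (2%:R * c * A) ^+ 2 by ring.
rewrite sqrtr_sqr ger0_norm ?mulr_ge0 //.
have : 0 <= c * c * A by rewrite !mulr_ge0.
rewrite !expr2; nra.
Qed.

End StepRoot.

Section Recursion.
Variables (R : rcfType) (alpha L : R).

Local Notation tau := (tau_seq alpha L).
Local Notation A := (A_seq alpha L).
Local Notation a := (a_seq alpha L).

Lemma tauA_S k : tauA alpha L k.+1 = (tau k + alpha * a k / L, A k + a k).
Proof. by rewrite /= /a_seq /tau_seq /A_seq; case: tauA. Qed.

Lemma tau_seqS k : tau k.+1 = tau k + alpha * a k / L.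
Proof. by rewrite {1}/tau_seq tauA_S. Qed.

Lemma A_seqS k : A k.+1 = A k + a k.
Proof. by rewrite {1}/A_seq tauA_S. Qed.

Lemma tau_seqE k : tau k = alpha / L * A k.
Proof.
elim: k => [|k IHk]; first by rewrite /tau_seq /A_seq /= mulr1.
by rewrite tau_seqS A_seqS IHk; ring.
Qed.

Hypotheses (alpha_gt0 : 0 < alpha) (L_gt0 : 0 < L).

Let c := Num.sqrt alpha / (2%:R * Num.sqrt L).

Lemma rate_sqr : 4%:R * c ^+ 2 = alpha / L.
Proof.
rewrite /c expr_div_n exprMn !sqr_sqrtr ?ltW //; field.
by rewrite gt_eqF.
Qed.

Lemma A_seq_ge k : (1 + c) ^+ (2 * k) <= A k.
Proof.
have c_ge0 : 0 <= c by rewrite divr_ge0 ?mulr_ge0 ?sqrtr_ge0.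
elim: k => [|k IHk]; first by rewrite /A_seq /= expr0.
have A_ge0 : 0 <= A k by apply: le_trans IHk; rewrite exprn_ge0 ?addr_ge0.
rewrite mulnS exprD A_seqS /a_seq tau_seqE -rate_sqr.
apply: le_trans (step_a_growth c_ge0 A_ge0).
by rewrite ler_wpM2l ?sqr_ge0.
Qed.

Lemma A_seq_gt0 k : 0 < A k.
Proof.
apply: lt_le_trans (A_seq_ge k).
by rewrite exprn_gt0 // ltr_pwDl ?divr_ge0 ?mulr_ge0 ?sqrtr_ge0.
Qed.

Lemma a_seq_sqr k : a k ^+ 2 = tau k * A k.+1.
Proof.
have A_ge0 := ltW (A_seq_gt0 k).
have tau_ge0 : 0 <= tau k by rewrite tau_seqE mulr_ge0 // divr_ge0 ?ltW.
by rewrite A_seqS /a_seq step_a_sqr.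
Qed.

End Recursion.

Theorem lemmaD2 (R : rcfType) (alpha L : R) (halpha : 0 < alpha) (hL : 0 < L) :
  forall k : nat,
    [/\ A_seq alpha L k / L = tau_seq alpha L k / alpha,
        a_seq alpha L k ^+ 2 = tau_seq alpha L k * A_seq alpha L k.+1,
        a_seq alpha L k ^+ 2 = tau_seq alpha L k.+1 * A_seq alpha L k
      & A_seq alpha L k >= (1 + Num.sqrt alpha / (2%:R * Num.sqrt L)) ^+ (2 * k)].
Proof.
move=> k; split; [| exact: a_seq_sqr | | exact: A_seq_ge].
- by rewrite tau_seqE; field; rewrite !gt_eqF.
- by rewrite (a_seq_sqr halpha hL) !tau_seqE; ring.
Qed.
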